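(* Let $\mathcal{H}_A,\mathcal{H}_B$ be finite-dimensional Hilbert spaces and let $\rho_{AB}$ be a density operator on $\mathcal{H}_A\otimes\mathcal{H}_B$. Let $\lambda_1,\dots,\lambda_R>0$ be the operator Schmidt coefficients of $\rho_{AB}$, i.e. $\rho_{AB}/\sqrt{\mathrm{Tr}(\rho_{AB}^2)}=\sum_{i=1}^R\lambda_i\,O_{A,i}\otimes O_{B,i}$ with $\{O_{A,i}\}$ and $\{O_{B,i}\}$ orthonormal families with respect to the Hilbert–Schmidt inner product (so $\sum_i\lambda_i^2=1$). Define the Rényi 2-operator entanglement $S^{(2)}(\rho_{AB})=-\log\big(\sum_{i=1}^R\lambda_i^4\big)$ and the Rényi 2-entropy $R^{(2)}(\rho_{AB})=-\log\big(\mathrm{Tr}(\rho_{AB}^2)\big)$. If $$S^{(2)}(\rho_{AB})>R^{(2)}(\rho_{AB}),$$ then $\rho_{AB}$ is entangled across the bipartition $A$ versus $B$, i.e. it cannot be written as a convex combination $\sum_k\alpha_k\rho_A^{(k)}\otimes\rho_B^{(k)}$ with $\alpha_k\ge0$ and $\rho_A^{(k)},\rho_B^{(k)}$ density operators on $\mathcal{H}_A,\mathcal{H}_B$.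
   Context: The operator Schmidt decomposition of an operator is its Schmidt decomposition as a vector in $\mathrm{End}(\mathcal{H}_A)\otimes\mathrm{End}(\mathcal{H}_B)$ equipped with the Hilbert–Schmidt inner product $\langle X,Y\rangle=\mathrm{Tr}(X^\dagger Y)$; the Schmidt coefficients are unique. *)

From HB Require Import structures.
From mathcomp Require Import all_boot all_order all_algebra.
From mathcomp Require Import complex mxtens.
From mathcomp Require Import reals exp.
Set Implicit Arguments. Unset Strict Implicit. Unset Printing Implicit Defensive.
Import Order.TTheory GRing.Theory Num.Theory.
Local Open Scope ring_scope.

Section QDefs.
Variable R : realType.
Local Notation C := (R[i]).

Definition adjmx (p q : nat) (A : 'M[C]_(p, q)) : 'M[C]_(q, p) :=
  (map_mx Num.conj A)^T.

Definition hs_inner (p : nat) (X Y : 'M[C]_p) : C := \tr (adjmx X *m Y).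

Definition is_density (p : nat) (rho : 'M[C]_p) : Prop :=
  [/\ adjmx rho = rho,
      (forall v : 'cV[C]_p, 0 <= (adjmx v *m rho *m v) 0 0)
    & \tr rho = 1].

(* Tr(rho^2), as a real number (rho Hermitian) *)
Definition purity (p : nat) (rho : 'M[C]_p) : R := complex.Re (\tr (rho *m rho)).

Definition separable (m n : nat) (rho : 'M[C]_(m * n)) : Prop :=
  exists (K : nat) (alpha : 'I_K -> R) (rA : 'I_K -> 'M[C]_m) (rB : 'I_K -> 'M[C]_n),
    [/\ forall k, 0 <= alpha k,
        \sum_(k < K) alpha k = 1,
        forall k, is_density (rA k),
        forall k, is_density (rB k)
      & rho = \sum_(k < K) ((alpha k)%:C)%C *: (rA k *t rB k)].

Definition op_schmidt_decomp (m n r : nat) (rho : 'M[C]_(m * n))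
    (lam : 'I_r -> R) (OA : 'I_r -> 'M[C]_m) (OB : 'I_r -> 'M[C]_n) : Prop :=
  [/\ forall i, 0 < lam i,
      forall i j, hs_inner (OA i) (OA j) = (i == j)%:R,
      forall i j, hs_inner (OB i) (OB j) = (i == j)%:R
    & (((Num.sqrt (purity rho))^-1)%:C)%C *: rho
        = \sum_(i < r) ((lam i)%:C)%C *: (OA i *t OB i)].

Definition renyi2_op_ent (r : nat) (lam : 'I_r -> R) : R :=
  - ln (\sum_(i < r) lam i ^+ 4).
Definition renyi2_entropy (p : nat) (rho : 'M[C]_p) : R := - ln (purity rho).

End QDefs.

(* Write s = sqrt(Tr rho^2) and T_i = OA_i (x) OB_i, so that <T_i, rho> = s lam_i.
   For a product rA (x) rB of density operators, <T_i, rA (x) rB> = a_i b_i with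
   Bessel coefficients sum_i |a_i|^2 <= Tr rA^2 <= 1 and likewise for b, hence
   |sum_i a_i b_i| <= 1; by convexity a separable rho has s sum_i lam_i <= 1.
   As lam^4 - 3 s^2 lam^2 + 2 s^3 lam = lam (lam - s)^2 (lam + 2 s) >= 0 and
   sum_i lam_i^2 = 1, summing gives sum_i lam_i^4 >= 3 s^2 - 2 s^2 (s sum_i lam_i)
   >= s^2 = Tr rho^2, i.e. S2 <= R2. *)
From HB Require Import structures.
From mathcomp Require Import all_boot all_order all_algebra.
From mathcomp Require Import complex mxtens.
From mathcomp Require Import reals exp.
From mathcomp Require Import ring lra.
Import Order.TTheory GRing.Theory Num.Theory.
Set Implicit Arguments. Unset Strict Implicit. Unset Printing Implicit Defensive.
Local Open Scope ring_scope.

Lemma norm_sum_mul_le1 (F : numDomainType) (r : nat) (a b : 'I_r -> F) :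
  \sum_i `|a i| ^+ 2 <= 1 -> \sum_i `|b i| ^+ 2 <= 1 ->
  `|\sum_i a i * b i| <= 1.
Proof.
move=> a_le1 b_le1; apply: le_trans (ler_norm_sum _ _ _) _.
suff : (\sum_i `|a i * b i|) *+ 2 <= 1 *+ 2 by rewrite lerMn2r.
rewrite -sumrMnl; apply: le_trans (_ : \sum_i (`|a i| ^+ 2 + `|b i| ^+ 2) <= _).
  apply: ler_sum => i _; rewrite normrM.
  exact: (real_leif_mean_square_scaled (normr_real _) (normr_real _)).1.
by rewrite big_split /= mulr2n lerD.
Qed.

Lemma sqr_le_sum_pow4 (F : realFieldType) (r : nat) (lam : 'I_r -> F) (s : F) :
  (forall i, 0 <= lam i) -> 0 <= s ->
  \sum_i lam i ^+ 2 = 1 -> s * \sum_i lam i <= 1 ->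
  s ^+ 2 <= \sum_i lam i ^+ 4.
Proof.
move=> lam_ge0 s_ge0 sum_sqr1 sL_le1.
have lam_pow4_ge i : 3 * s ^+ 2 * lam i ^+ 2 - 2 * s ^+ 3 * lam i <= lam i ^+ 4.
  rewrite -subr_ge0.
  have -> : lam i ^+ 4 - (3 * s ^+ 2 * lam i ^+ 2 - 2 * s ^+ 3 * lam i)
      = lam i * (lam i - s) ^+ 2 * (lam i + 2 * s) by ring.
  have lam_i_ge0 := lam_ge0 i.
  by rewrite mulr_ge0 ?(mulr_ge0 _ (sqr_ge0 _)) //; lra.
apply: le_trans (ler_sum _ (fun i _ => lam_pow4_ge i)).
rewrite sumrB -!mulr_sumr sum_sqr1.
have : 0 <= s ^+ 2 * (1 - s * \sum_i lam i).
  by rewrite mulr_ge0 ?sqr_ge0 ?subr_ge0.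
nra.
Qed.

Section HilbertSchmidt.
Variable R : realType.
Local Notation C := R[i].
Local Notation hs := (@hs_inner R _).

Lemma conjC_real_complex (x : R) : (x%:C%C)^* = x%:C%C :> C.
Proof. by apply/conj_Creal/complex_realP; exists x. Qed.

Definition hs_orthonormal (p r : nat) (T : 'I_r -> 'M[C]_p) :=
  forall i j, hs (T i) (T j) = (i == j)%:R.

Lemma hs_innerE p (X Y : 'M[C]_p) : hs X Y = \sum_i \sum_k (X k i)^* * Y k i.
Proof.
rewrite /hs_inner /mxtrace; apply: eq_bigr => i _; rewrite !mxE.
by apply: eq_bigr => k _; rewrite !mxE.
Qed.

Lemma hs_inner_conj p (X Y : 'M[C]_p) : hs Y X = (hs X Y)^*.
Proof.
rewrite !hs_innerE rmorph_sum; apply: eq_bigr => i _; rewrite rmorph_sum.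
by apply: eq_bigr => k _; rewrite rmorphM /= conjCK mulrC.
Qed.

Lemma hs_innerBr p (X Y Z : 'M[C]_p) : hs X (Y - Z) = hs X Y - hs X Z.
Proof. by rewrite /hs_inner mulmxBr raddfB. Qed.

Lemma hs_innerZr p (X Y : 'M[C]_p) a : hs X (a *: Y) = a * hs X Y.
Proof. by rewrite /hs_inner -scalemxAr mxtraceZ. Qed.

Lemma hs_inner_sumr p r (X : 'M[C]_p) (F : 'I_r -> 'M[C]_p) :
  hs X (\sum_j F j) = \sum_j hs X (F j).
Proof. by rewrite /hs_inner mulmx_sumr raddf_sum. Qed.

Lemma hs_innerBl p (X Y Z : 'M[C]_p) : hs (Y - Z) X = hs Y X - hs Z X.
Proof. by rewrite hs_inner_conj hs_innerBr rmorphB /= -!hs_inner_conj. Qed.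

Lemma hs_innerZl p (X Y : 'M[C]_p) a : hs (a *: Y) X = a^* * hs Y X.
Proof. by rewrite hs_inner_conj hs_innerZr rmorphM /= -!hs_inner_conj. Qed.

Lemma hs_inner_suml p r (X : 'M[C]_p) (F : 'I_r -> 'M[C]_p) :
  hs (\sum_j F j) X = \sum_j hs (F j) X.
Proof.
rewrite hs_inner_conj hs_inner_sumr rmorph_sum.
by apply: eq_bigr => j _; rewrite /= -hs_inner_conj.
Qed.

Lemma hs_inner_normE p (X : 'M[C]_p) : hs X X = \sum_i \sum_k `|X k i| ^+ 2.
Proof.
rewrite hs_innerE; apply: eq_bigr => i _; apply: eq_bigr => k _.
by rewrite normCKC.
Qed.

Lemma hs_inner_ge0 p (X : 'M[C]_p) : 0 <= hs X X.
Proof.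
rewrite hs_inner_normE sumr_ge0 // => i _.
by rewrite sumr_ge0 // => k _; rewrite exprn_ge0.
Qed.

Lemma hs_inner_eq0 p (X : 'M[C]_p) : hs X X = 0 -> X = 0.
Proof.
have sqr_norm_ge0 (x : C) : 0 <= `|x| ^+ 2 by rewrite exprn_ge0.
rewrite hs_inner_normE => /psumr_eq0P X0; apply/matrixP => k i; rewrite mxE.
have /psumr_eq0P Xi0 :=
  X0 (fun i _ => sumr_ge0 _ (fun k _ => sqr_norm_ge0 _)) i isT.
by apply/eqP; rewrite -normr_eq0 -sqrf_eq0 Xi0.
Qed.

Lemma hs_inner_tens m n (A A' : 'M[C]_m) (B B' : 'M[C]_n) :
  hs (A *t B) (A' *t B') = hs A A' * hs B B'.
Proof.
have adjmx_tens : adjmx (A *t B) = adjmx A *t adjmx B.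
  by apply/matrixP => i j; rewrite !mxE rmorphM.
rewrite /hs_inner adjmx_tens tensmx_mul /mxtrace mulr_sum.
by apply: eq_bigr => i _; rewrite !mxE.
Qed.

Lemma hs_orthonormal_tens m n r (OA : 'I_r -> 'M[C]_m) (OB : 'I_r -> 'M[C]_n) :
  hs_orthonormal OA -> hs_orthonormal OB ->
  hs_orthonormal (fun i => OA i *t OB i).
Proof.
move=> oA oB i j; rewrite hs_inner_tens oA oB.
by case: eqP; rewrite ?mulr1 ?mulr0.
Qed.

Section Orthonormal.
Variables (p r : nat) (T : 'I_r -> 'M[C]_p).
Hypothesis T_orthonormal : hs_orthonormal T.

Lemma hs_inner_orthonormal_coef (a : 'I_r -> C) i :
  hs (T i) (\sum_j a j *: T j) = a i.
Proof.
rewrite hs_inner_sumr (bigD1 i) //= hs_innerZr T_orthonormal eqxx mulr1.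
rewrite big1 ?addr0 // => j /negbTE ji.
by rewrite hs_innerZr T_orthonormal eq_sym ji mulr0.
Qed.

Lemma hs_inner_orthonormal_sum (a : 'I_r -> C) :
  hs (\sum_j a j *: T j) (\sum_j a j *: T j) = \sum_j (a j)^* * a j.
Proof.
rewrite hs_inner_suml; apply: eq_bigr => j _.
by rewrite hs_innerZl hs_inner_orthonormal_coef.
Qed.

Lemma bessel (X : 'M[C]_p) : \sum_i `|hs (T i) X| ^+ 2 <= hs X X.
Proof.
under eq_bigr do rewrite normCKC.
set a := fun i => hs (T i) X; set S := \sum_j a j *: T j.
have SS : hs S S = \sum_i (a i)^* * a i by rewrite hs_inner_orthonormal_sum.
have SX : hs S X = \sum_i (a i)^* * a i.
  by rewrite hs_inner_suml; apply: eq_bigr => j _; rewrite hs_innerZl.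
have XS : hs X S = \sum_i (a i)^* * a i.
  rewrite hs_inner_sumr; apply: eq_bigr => j _.
  by rewrite hs_innerZr [hs X _]hs_inner_conj mulrC.
have := hs_inner_ge0 (X - S).
by rewrite hs_innerBl !hs_innerBr SS SX XS subrr subr0 subr_ge0.
Qed.

End Orthonormal.

Section PositiveSemidefinite.
Variables (p : nat) (rho : 'M[C]_p).
Hypothesis rho_herm : adjmx rho = rho.
Hypothesis rho_psd : forall v : 'cV[C]_p, 0 <= (adjmx v *m rho *m v) 0 0.

Lemma psd_quad_form2 i k (x y : C) :
  0 <= x^* * x * rho i i + x^* * y * rho i k + y^* * x * rho k i + y^* * y * rho k k.
Proof.
have := rho_psd (x *: delta_mx i 0 + y *: delta_mx k 0).
have adjmx_delta j : adjmx (delta_mx j 0 : 'cV[C]_p) = delta_mx 0 j.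
  by apply/matrixP => a b; rewrite !mxE rmorph_nat andbC.
have delta_mulmx a b :
    (delta_mx 0 a : 'rV_p) *m rho *m (delta_mx b 0 : 'cV_p) = (rho a b)%:M.
  by apply/matrixP => u v; rewrite [u]ord1 [v]ord1 -rowE -colE !mxE mulr1n.
have adjmxZD (a b : C) (A B : 'cV[C]_p) :
    adjmx (a *: A + b *: B) = a^* *: adjmx A + b^* *: adjmx B.
  by apply/matrixP => u v; rewrite !mxE rmorphD !rmorphM.
rewrite adjmxZD !adjmx_delta !mulmxDl !mulmxDr -!scalemxAl -!scalemxAr.
rewrite !delta_mulmx !mxE /= !mulr1n.
by congr (0 <= _); ring.
Qed.

Lemma psd_diag_ge0 i : 0 <= rho i i.
Proof.
have := psd_quad_form2 i i 1 0.
by rewrite !rmorph0 !rmorph1 !(mul0r, mulr0, mul1r, addr0).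
Qed.

Lemma psd_entry_le i k : `|rho i k| ^+ 2 <= rho i i * rho k k.
Proof.
have quad := psd_quad_form2 i k.
have rho_ki : rho k i = (rho i k)^* by rewrite -{1}rho_herm !mxE.
have di_ge0 := psd_diag_ge0 i; have dk_ge0 := psd_diag_ge0 k.
have conj_di : (rho i i)^* = rho i i by rewrite conj_Creal ?ger0_real.
have conj_dk : (rho k k)^* = rho k k by rewrite conj_Creal ?ger0_real.
rewrite normCKC; set z := rho i k in quad rho_ki *.
set di := rho i i in quad di_ge0 conj_di *.
set dk := rho k k in quad dk_ge0 conj_dk *.
have [dk0|dk_neq0] := eqVneq dk 0.
  have := quad (- z) (di + 1).
  rewrite rho_ki dk0 rmorphN rmorphD rmorph1 /= conj_di.
  have -> : - z^* * - z * di + - z^* * (di + 1) * z + (di + 1) * - z * z^*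
      + (di + 1) * (di + 1) * 0 = (di + 2) * - (z^* * z) by ring.
  rewrite mulr0 pmulr_rge0 ?oppr_ge0 //.
  by apply: (lt_le_trans (ltr0Sn _ 1)); rewrite lerDr.
have := quad dk (- z^*); rewrite rho_ki rmorphN /= conjCK conj_dk.
have -> : dk * dk * di + dk * - z^* * z + - z * dk * z^* + - z * - z^* * dk
   = dk * (di * dk - z^* * z) by ring.
by rewrite pmulr_rge0 ?subr_ge0 // lt_def dk_neq0.
Qed.

Lemma psd_hs_inner_le_sqr_trace : hs rho rho <= \tr rho ^+ 2.
Proof.
rewrite hs_inner_normE expr2 {1}/mxtrace mulr_suml; apply: ler_sum => i _.
rewrite mulrC /mxtrace mulr_suml; apply: ler_sum => k _.
exact: psd_entry_le.
Qed.

End PositiveSemidefinite.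

Lemma density_hs_inner_le1 p (rho : 'M[C]_p) : is_density rho -> hs rho rho <= 1.
Proof.
by case=> herm psd tr1; rewrite -(expr1n _ 2) -tr1 psd_hs_inner_le_sqr_trace.
Qed.

Lemma hermitian_hs_inner_purity p (rho : 'M[C]_p) :
  adjmx rho = rho -> hs rho rho = (purity rho)%:C%C.
Proof.
move=> herm; have trE : hs rho rho = \tr (rho *m rho) by rewrite /hs_inner herm.
by rewrite /purity -trE RRe_real // ger0_real // hs_inner_ge0.
Qed.

Lemma density_purity_gt0 p (rho : 'M[C]_p) : is_density rho -> 0 < purity rho.
Proof.
move=> rho_dens; have [herm _ tr1] := rho_dens.
have := hs_inner_ge0 rho; rewrite hermitian_hs_inner_purity // ler0c le_eqVlt.
case/predU1P=> [P0|//]; have /hs_inner_eq0 rho0 : hs rho rho = 0.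
  by rewrite hermitian_hs_inner_purity // -P0.
by move: tr1; rewrite rho0 mxtrace0 => /eqP; rewrite eq_sym oner_eq0.
Qed.

Lemma density_coef_product_le1 m n r (rA : 'M[C]_m) (rB : 'M[C]_n)
    (OA : 'I_r -> 'M[C]_m) (OB : 'I_r -> 'M[C]_n) :
  is_density rA -> is_density rB -> hs_orthonormal OA -> hs_orthonormal OB ->
  `|\sum_i hs (OA i) rA * hs (OB i) rB| <= 1.
Proof.
move=> rA_dens rB_dens oA oB; apply: norm_sum_mul_le1.
  exact: le_trans (bessel oA rA) (density_hs_inner_le1 rA_dens).
exact: le_trans (bessel oB rB) (density_hs_inner_le1 rB_dens).
Qed.

Lemma separable_coef_sum_le1 m n r (rho : 'M[C]_(m * n))
    (OA : 'I_r -> 'M[C]_m) (OB : 'I_r -> 'M[C]_n) :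
  hs_orthonormal OA -> hs_orthonormal OB -> separable rho ->
  `|\sum_i hs (OA i *t OB i) rho| <= 1.
Proof.
move=> oA oB [K [alpha [rA [rB [alpha_ge0 alpha_sum1 rA_dens rB_dens ->]]]]].
have -> : \sum_i hs (OA i *t OB i) (\sum_k (alpha k)%:C%C *: (rA k *t rB k))
    = \sum_k (alpha k)%:C%C * \sum_i hs (OA i) (rA k) * hs (OB i) (rB k).
  under eq_bigr do rewrite hs_inner_sumr.
  rewrite exchange_big; apply: eq_bigr => k _; rewrite mulr_sumr.
  by apply: eq_bigr => i _; rewrite hs_innerZr hs_inner_tens.
apply: le_trans (ler_norm_sum _ _ _) _.
rewrite -(rmorph1 (real_complex R)) -alpha_sum1 rmorph_sum; apply: ler_sum => k _.
rewrite normrM ger0_norm ?ler0c // ler_piMr ?ler0c //.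
exact: density_coef_product_le1.
Qed.

Section SchmidtDecomposition.
Variables (m n r : nat) (rho : 'M[C]_(m * n)).
Variables (lam : 'I_r -> R) (OA : 'I_r -> 'M[C]_m) (OB : 'I_r -> 'M[C]_n).
Hypothesis rho_herm : adjmx rho = rho.
Hypothesis purity_gt0 : 0 < purity rho.
Hypothesis rho_schmidt : op_schmidt_decomp rho lam OA OB.

Local Notation s := (Num.sqrt (purity rho)).
Local Notation T i := (OA i *t OB i).

Lemma schmidt_orthonormal : hs_orthonormal (fun i => T i).
Proof. by have [_ oA oB _] := rho_schmidt; apply: hs_orthonormal_tens. Qed.

Lemma schmidt_expansion : rho = s%:C%C *: \sum_i (lam i)%:C%C *: T i.
Proof.
have [_ _ _ <-] := rho_schmidt.
by rewrite scalerA -rmorphM /= mulfV ?gt_eqF ?sqrtr_gt0 // rmorph1 scale1r.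
Qed.

Lemma schmidt_coef i : hs (T i) rho = (s * lam i)%:C%C.
Proof.
rewrite [X in hs _ X]schmidt_expansion hs_innerZr.
by rewrite (hs_inner_orthonormal_coef schmidt_orthonormal) rmorphM.
Qed.

Lemma schmidt_sum_sqr : \sum_i lam i ^+ 2 = 1.
Proof.
have := hermitian_hs_inner_purity rho_herm.
have s_sqr : s ^+ 2 = purity rho by rewrite sqr_sqrtr ?ltW.
set P := purity rho in s_sqr *.
rewrite [X in hs X _]schmidt_expansion [X in hs _ X]schmidt_expansion.
rewrite hs_innerZl hs_innerZr (hs_inner_orthonormal_sum schmidt_orthonormal).
under eq_bigr do rewrite conjC_real_complex -rmorphM -expr2.
rewrite conjC_real_complex mulrA -!rmorphM -rmorph_sum -rmorphM -expr2 s_sqr.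
move/complexI.
by rewrite -{2}[P]mulr1 => /(mulfI (lt0r_neq0 purity_gt0)).
Qed.

End SchmidtDecomposition.

End HilbertSchmidt.

Theorem proposition1 (R : realType) (m n : nat) (rho : 'M[R[i]]_(m * n))
    (r : nat) (lam : 'I_r -> R) (OA : 'I_r -> 'M[R[i]]_m) (OB : 'I_r -> 'M[R[i]]_n) :
  is_density rho ->
  op_schmidt_decomp rho lam OA OB ->
  renyi2_entropy rho < renyi2_op_ent lam ->
  ~ separable rho.
Proof.
move=> rho_dens rho_schmidt entropy_lt rho_sep.
have [rho_herm _ _] := rho_dens.
have P_gt0 := density_purity_gt0 rho_dens.
have [lam_gt0 oA oB _] := rho_schmidt.
have sL_le1 : Num.sqrt (purity rho) * \sum_i lam i <= 1.
  have := separable_coef_sum_le1 oA oB rho_sep.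
  under eq_bigr do rewrite (schmidt_coef P_gt0 rho_schmidt).
  rewrite -rmorph_sum -mulr_sumr ger0_norm ?lecR //.
  by rewrite mulr_ge0 ?sqrtr_ge0 // sumr_ge0 // => i _; rewrite ltW.
have P_le := sqr_le_sum_pow4 (fun i => ltW (lam_gt0 i)) (sqrtr_ge0 _)
  (schmidt_sum_sqr rho_herm P_gt0 rho_schmidt) sL_le1.
rewrite (sqr_sqrtr (ltW P_gt0)) in P_le.
move: entropy_lt; rewrite /renyi2_entropy /renyi2_op_ent ltrN2 ltNge.
rewrite ler_ln ?posrE //.
  by move/negP; apply.
exact: lt_le_trans P_le.
Qed.
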